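(* Let $P=\{(x,y)\in\mathbb{R}^{p+q}: Ax+Gy\le b\}$ be a rational polyhedron and let $\alpha x+\beta y\le\gamma$ (with $\alpha\in\mathbb{Q}^p$, $\beta\in\mathbb{Q}^q$ row vectors, $\gamma\in\mathbb{Q}$) be a cutting plane for $P$, i.e. an inequality that is valid for $P_I$ but not valid for $P$. Then there is a natural number $k\ge 2$ such that $\alpha x+\beta y\le\gamma$ is a $k$-disjunctive cut for $P$.
   Context: Notation: $A\in\mathbb{Q}^{m\times p}$, $G\in\mathbb{Q}^{m\times q}$, $b\in\mathbb{Q}^m$; $P_I=\mathrm{conv}\{(x,y)\in P: x\in\mathbb{Z}^p\}$ is the mixed integer hull. A $k$-disjunction ($k\ge 2$) is a family of $k$ inequalities $d^1x\le\delta^1,\dots,d^kx\le\delta^k$ with $d^i\in\mathbb{Z}^p$ (row vectors, not necessarily distinct) and $\delta^i\in\mathbb{Z}$ such that every $x\in\mathbb{Z}^p$ satisfies $d^ix\le\delta^i$ for at least one $i$. For a closed convex set $C\subseteq\mathbb{R}^{p+q}$, an inequality $\alpha x+\beta y\le\gamma$ is a $k$-disjunctive cut for $C$ if it is not valid for $C$ and there is a $k$-disjunction such that every $(x,y)\in C$ with $\alpha x+\beta y>\gamma$ satisfies $d^ix>\delta^i$ for all $i=1,\dots,k$. *)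

From Stdlib Require Import Reals QArith Qreals ZArith List.
Open Scope R_scope.

(* A vector of R^n is represented by a function nat -> R; only the
   coordinates 0..n-1 matter. *)
Definition vec := nat -> R.

Fixpoint dot (n : nat) (a x : vec) : R :=
  match n with
  | O => 0
  | S n' => dot n' a x + a n' * x n'
  end.

Definition point := (vec * vec)%type.
Definition pset := point -> Prop.

Definition polyhedron (m p q : nat) (A G : nat -> nat -> Q) (b : nat -> Q) : pset :=
  fun z => forall i, (i < m)%nat ->
    dot p (fun j => Q2R (A i j)) (fst z) + dot q (fun j => Q2R (G i j)) (snd z)
      <= Q2R (b i).

Definition int_vec (p : nat) (x : vec) : Prop :=
  forall j, (j < p)%nat -> exists z : Z, x j = IZR z.

Definition wsum_w (l : list (R * point)) : R :=
  fold_right (fun tz acc => fst tz + acc) 0 l.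
Definition wsum_x (l : list (R * point)) (j : nat) : R :=
  fold_right (fun tz acc => fst tz * fst (snd tz) j + acc) 0 l.
Definition wsum_y (l : list (R * point)) (j : nat) : R :=
  fold_right (fun tz acc => fst tz * snd (snd tz) j + acc) 0 l.

Definition conv (p q : nat) (S : pset) : pset :=
  fun z => exists l : list (R * point),
    Forall (fun tz => 0 <= fst tz /\ S (snd tz)) l /\
    wsum_w l = 1 /\
    (forall j, (j < p)%nat -> fst z j = wsum_x l j) /\
    (forall j, (j < q)%nat -> snd z j = wsum_y l j).

Definition mixed_int_hull (p q : nat) (P : pset) : pset :=
  conv p q (fun z => P z /\ int_vec p (fst z)).

Definition valid (p q : nat) (alpha beta : nat -> Q) (gamma : Q) (C : pset) : Prop :=
  forall z, C z ->
    dot p (fun j => Q2R (alpha j)) (fst z) + dot q (fun j => Q2R (beta j)) (snd z)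
      <= Q2R gamma.

Definition k_disjunction (p k : nat) (d : nat -> nat -> Z) (delta : nat -> Z) : Prop :=
  (2 <= k)%nat /\
  forall x : vec, int_vec p x ->
    exists i, (i < k)%nat /\ dot p (fun j => IZR (d i j)) x <= IZR (delta i).

Definition k_disjunctive_cut (p q k : nat) (alpha beta : nat -> Q) (gamma : Q)
    (C : pset) : Prop :=
  ~ valid p q alpha beta gamma C /\
  exists (d : nat -> nat -> Z) (delta : nat -> Z),
    k_disjunction p k d delta /\
    forall z, C z ->
      dot p (fun j => Q2R (alpha j)) (fst z) + dot q (fun j => Q2R (beta j)) (snd z)
        > Q2R gamma ->
      forall i, (i < k)%nat -> dot p (fun j => IZR (d i j)) (fst z) > IZR (delta i).

From Stdlib Require Import Reals QArith Qreals ZArith List Lra Lia Classical.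
Open Scope R_scope.

(* The cut region of P, i.e. the set of points of P that
   violate alpha x + beta y <= gamma, is described by a finite system of
   rational inequalities, one of them strict.  Fourier-Motzkin elimination of
   the continuous variables y_0, ..., y_{q-1} turns it into a finite system F
   of rational (strict or non-strict) inequalities in x alone, whose solution
   set is exactly the projection of the cut region onto the x-space.  Since
   the cut is valid for P_I, no integral x solves F, so every integral x
   violates some inequality of F; clearing denominators and rounding, the
   negation of each inequality of F becomes an integral inequality
   d^i x <= delta^i that still holds at every integral x violating it, while
   every point of the cut region satisfies d^i x > delta^i.  These integral
   inequalities (padded to at least two) form the required k-disjunction. *)

Lemma dot_ext n a a' x x' :
  (forall j, (j < n)%nat -> a j * x j = a' j * x' j) -> dot n a x = dot n a' x'.
Proof.
  induction n as [|n IH]; intros H; simpl; [reflexivity|].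
  rewrite IH, (H n); [reflexivity | lia | intros j Hj; apply H; lia].
Qed.

Lemma dot_lin n (s t : R) a a' x :
  dot n (fun j => s * a j + t * a' j) x = s * dot n a x + t * dot n a' x.
Proof. induction n; simpl; [ring | rewrite IHn; ring]. Qed.

Lemma dot_scal n (s : R) a x : dot n (fun j => s * a j) x = s * dot n a x.
Proof. induction n; simpl; [ring | rewrite IHn; ring]. Qed.

Lemma dot_opp n a x : dot n (fun j => - a j) x = - dot n a x.
Proof. induction n; simpl; [ring | rewrite IHn; ring]. Qed.

Lemma dot_zero n a x : (forall j, (j < n)%nat -> a j = 0) -> dot n a x = 0.
Proof.
  induction n as [|n IH]; intros H; simpl; [reflexivity|].
  rewrite IH, (H n); [ring | lia | intros j Hj; apply H; lia].
Qed.

Lemma dot_int n (d : nat -> Z) x :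
  int_vec n x -> exists z, dot n (fun j => IZR (d j)) x = IZR z.
Proof.
  induction n as [|n IH]; simpl; intros Hx; [exists 0%Z; reflexivity|].
  destruct IH as [z Hz]; [intros j Hj; apply Hx; lia|].
  destruct (Hx n) as [w Hw]; [lia|].
  exists (z + d n * w)%Z. rewrite Hz, Hw, plus_IZR, mult_IZR. reflexivity.
Qed.

Definition upd (y : vec) (j : nat) (t : R) : vec :=
  fun i => if Nat.eqb i j then t else y i.

Lemma dot_upd n a y j t :
  (j < n)%nat -> dot n a (upd y j t) = dot n a y + a j * (t - y j).
Proof.
  induction n as [|n IH]; intros Hj; [lia|]. simpl. unfold upd at 2.
  destruct (Nat.eqb_spec n j) as [->|Hne].
  - rewrite (dot_ext j a a (upd y j t) y); [ring|].
    intros i Hi. unfold upd. destruct (Nat.eqb_spec i j); [lia | reflexivity].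
  - rewrite IH by lia. ring.
Qed.

Definition Rrel (strict : bool) (v w : R) : Prop := if strict then v < w else v <= w.

Lemma Rrel_lt s v w : v < w -> Rrel s v w.
Proof. destruct s; simpl; lra. Qed.

Lemma Rrel_scale s N v w : 0 < N -> (Rrel s v w <-> Rrel s (N * v) (N * w)).
Proof. intros HN. destruct s; simpl; split; intros; nra. Qed.

Definition admits (upper : bool) (c : R * bool) (t : R) : Prop :=
  if upper then Rrel (snd c) t (fst c) else Rrel (snd c) (fst c) t.

Definition tighter (upper : bool) (c d : R * bool) : Prop :=
  forall t, admits upper c t -> admits upper d t.

Lemma tighter_total upper c d : tighter upper c d \/ tighter upper d c.
Proof.
  destruct c as [v s], d as [w s']. unfold tighter, admits; simpl.
  destruct upper, s, s', (total_order_T v w) as [[H|<-]|H];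
    solve [left; intros t; simpl; lra | right; intros t; simpl; lra].
Qed.

Lemma exists_least {A : Type} (le : A -> A -> Prop) :
  (forall a b, le a b \/ le b a) -> (forall a b c, le a b -> le b c -> le a c) ->
  forall l, l <> nil -> exists m, In m l /\ forall c, In c l -> le m c.
Proof.
  intros Htot Htrans l. induction l as [|a l IH]; intros Hl; [now contradiction Hl|].
  destruct l as [|b l].
  - exists a. split; [left; reflexivity|].
    intros c [<-|[]]. destruct (Htot a a); assumption.
  - destruct IH as [m [Hm Hmin]]; [discriminate|].
    destruct (Htot a m) as [Ham|Hma].
    + exists a. split; [left; reflexivity|].
      intros c [<-|Hc]; [destruct (Htot a a); assumption|].
      exact (Htrans _ _ _ Ham (Hmin c Hc)).
    + exists m. split; [right; exact Hm|].
      intros c [<-|Hc]; [exact Hma | exact (Hmin c Hc)].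
Qed.

(* The tightest upper bound and the tightest lower bound are compatible, and a
   point between them is admitted by all bounds. *)
Lemma bounds_feasible (Us Ls : list (R * bool)) :
  (forall u l, In u Us -> In l Ls -> Rrel (snd u || snd l) (fst l) (fst u)) ->
  exists t, (forall u, In u Us -> admits true u t) /\
            (forall l, In l Ls -> admits false l t).
Proof.
  intros Hcompat.
  assert (least : forall upper (l : list (R * bool)), l <> nil ->
            exists m, In m l /\ forall c, In c l -> tighter upper m c).
  { intros upper l. apply exists_least; [apply tighter_total | unfold tighter; auto]. }
  destruct Us as [|u Us]; destruct Ls as [|l Ls].
  - exists 0. split; intros ? [].
  - destruct (least false (l :: Ls)) as [lm [_ Hlm]]; [discriminate|].
    exists (fst lm + 1). split; [intros ? []|].
    intros c Hc. apply (Hlm c Hc). apply Rrel_lt. lra.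
  - destruct (least true (u :: Us)) as [um [_ Hum]]; [discriminate|].
    exists (fst um - 1). split; [|intros ? []].
    intros c Hc. apply (Hum c Hc). apply Rrel_lt. lra.
  - destruct (least true (u :: Us)) as [um [Hum_in Hum]]; [discriminate|].
    destruct (least false (l :: Ls)) as [lm [Hlm_in Hlm]]; [discriminate|].
    pose proof (Hcompat um lm Hum_in Hlm_in) as Hul.
    destruct (Rlt_dec (fst lm) (fst um)) as [Hlt|Hge].
    + exists ((fst lm + fst um) / 2).
      split; [intros c Hc; apply (Hum c Hc) | intros c Hc; apply (Hlm c Hc)];
        apply Rrel_lt; lra.
    + exists (fst lm).
      destruct um as [v su], lm as [w sl]; simpl in *.
      destruct su, sl; simpl in Hul; try lra.
      split; [intros c Hc; apply (Hum c Hc) | intros c Hc; apply (Hlm c Hc)];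
        simpl; lra.
Qed.

Record ineq := Ineq { cx : nat -> Q; cy : nat -> Q; rhs : Q; strict : bool }.

Definition xholds (p : nat) (c : ineq) (x : vec) : Prop :=
  Rrel (strict c) (dot p (fun j => Q2R (cx c j)) x) (Q2R (rhs c)).

Definition sign_is (o : comparison) (r : Q) : bool :=
  match o, Qcompare r 0 with Eq, Eq | Lt, Lt | Gt, Gt => true | _, _ => false end.

Lemma sign_is_self r : sign_is (Qcompare r 0) r = true.
Proof. unfold sign_is. destruct (Qcompare r 0); reflexivity. Qed.

Lemma sign_is_spec o r : sign_is o r = true ->
  match o with Eq => Q2R r = 0 | Lt => Q2R r < 0 | Gt => 0 < Q2R r end.
Proof.
  unfold sign_is. rewrite <- RMicromega.Q2R_0.
  destruct o, (Qcompare r 0) eqn:E; try discriminate; intros _.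
  - apply Qeq_eqR, Qeq_alt, E.
  - apply Qlt_Rlt, Qlt_alt, E.
  - apply Qlt_Rlt, Qgt_alt, E.
Qed.

Section FourierMotzkin.
Variables p q : nat.

Definition lhs (c : ineq) (x y : vec) : R :=
  dot p (fun j => Q2R (cx c j)) x + dot q (fun j => Q2R (cy c j)) y.
Definition holds (c : ineq) (x y : vec) : Prop := Rrel (strict c) (lhs c x y) (Q2R (rhs c)).
Definition holds_all (l : list ineq) (x y : vec) : Prop := forall c, In c l -> holds c x y.

Lemma holds_yfree c x y :
  (forall j, (j < q)%nat -> Q2R (cy c j) = 0) -> holds c x y <-> xholds p c x.
Proof. intros H0. unfold holds, lhs, xholds. rewrite (dot_zero q _ y H0), Rplus_0_r. tauto. Qed.

(* [comb j c1 c2] is the nonnegative combination (-cy c2 j) c1 + (cy c1 j) c2,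
   which for cy c1 j > 0 > cy c2 j is implied by c1, c2 and has no y_j. *)
Definition comb (j : nat) (c1 c2 : ineq) : ineq :=
  Ineq (fun i => - cy c2 j * cx c1 i + cy c1 j * cx c2 i)%Q
       (fun i => - cy c2 j * cy c1 i + cy c1 j * cy c2 i)%Q
       (- cy c2 j * rhs c1 + cy c1 j * rhs c2)%Q
       (strict c1 || strict c2).

Lemma lhs_comb j c1 c2 x y :
  lhs (comb j c1 c2) x y = - Q2R (cy c2 j) * lhs c1 x y + Q2R (cy c1 j) * lhs c2 x y.
Proof.
  unfold lhs, comb; simpl.
  rewrite (dot_ext p _ (fun i => - Q2R (cy c2 j) * Q2R (cx c1 i) + Q2R (cy c1 j) * Q2R (cx c2 i)) x x)
    by (intros; rewrite Q2R_plus, !Q2R_mult, Q2R_opp; ring).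
  rewrite (dot_ext q _ (fun i => - Q2R (cy c2 j) * Q2R (cy c1 i) + Q2R (cy c1 j) * Q2R (cy c2 i)) y y)
    by (intros; rewrite Q2R_plus, !Q2R_mult, Q2R_opp; ring).
  rewrite !dot_lin. ring.
Qed.

Lemma rhs_comb j c1 c2 :
  Q2R (rhs (comb j c1 c2)) = - Q2R (cy c2 j) * Q2R (rhs c1) + Q2R (cy c1 j) * Q2R (rhs c2).
Proof. simpl. rewrite Q2R_plus, !Q2R_mult, Q2R_opp. ring. Qed.

Definition elim (j : nat) (l : list ineq) : list ineq :=
  filter (fun c => sign_is Eq (cy c j)) l ++
  flat_map (fun c1 => map (comb j c1) (filter (fun c => sign_is Lt (cy c j)) l))
           (filter (fun c => sign_is Gt (cy c j)) l).

Lemma in_elim j l c : In c (elim j l) ->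
  (In c l /\ sign_is Eq (cy c j) = true) \/
  exists c1 c2, c = comb j c1 c2 /\ In c1 l /\ 0 < Q2R (cy c1 j) /\
                In c2 l /\ Q2R (cy c2 j) < 0.
Proof.
  unfold elim. rewrite in_app_iff, filter_In, in_flat_map.
  intros [H|[c1 [H1 H2]]]; [left; exact H|right].
  apply filter_In in H1 as [H1 P1]. apply in_map_iff in H2 as [c2 [<- H2]].
  apply filter_In in H2 as [H2 P2].
  exists c1, c2. repeat split; auto; [apply (sign_is_spec Gt) | apply (sign_is_spec Lt)]; auto.
Qed.

Lemma elim_sound j l x y : holds_all l x y -> holds_all (elim j l) x y.
Proof.
  intros H c Hc.
  destruct (in_elim _ _ _ Hc) as [[Hc1 _]|[c1 [c2 [-> [H1 [P1 [H2 P2]]]]]]]; [auto|].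
  pose proof (H _ H1) as S1. pose proof (H _ H2) as S2. unfold holds in *.
  rewrite lhs_comb, rhs_comb. simpl.
  destruct (strict c1), (strict c2); simpl in *; nra.
Qed.

Lemma elim_eliminates j l c : In c (elim j l) -> Q2R (cy c j) = 0.
Proof.
  intros Hc. destruct (in_elim _ _ _ Hc) as [[_ Z]|[c1 [c2 [-> _]]]].
  - exact (sign_is_spec Eq _ Z).
  - simpl. rewrite Q2R_plus, !Q2R_mult, Q2R_opp. ring.
Qed.

Lemma elim_keeps_zero j j' l : (forall c, In c l -> Q2R (cy c j') = 0) ->
  forall c, In c (elim j l) -> Q2R (cy c j') = 0.
Proof.
  intros H c Hc.
  destruct (in_elim _ _ _ Hc) as [[Hc1 _]|[c1 [c2 [-> [H1 [_ [H2 _]]]]]]]; [auto|].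
  simpl. rewrite Q2R_plus, !Q2R_mult, Q2R_opp, (H c1), (H c2) by auto. ring.
Qed.

(* The value of t at which c holds with equality when y_j is set to t. *)
Definition ybound (j : nat) (x y : vec) (c : ineq) : R :=
  y j + (Q2R (rhs c) - lhs c x y) / Q2R (cy c j).

Lemma lhs_upd c x y j t : (j < q)%nat ->
  lhs c x (upd y j t) = lhs c x y + Q2R (cy c j) * (t - y j).
Proof. intros Hj. unfold lhs. rewrite dot_upd by exact Hj. ring. Qed.

Lemma holds_upd_upper c x y j t : (j < q)%nat -> 0 < Q2R (cy c j) ->
  admits true (ybound j x y c, strict c) t -> holds c x (upd y j t).
Proof.
  intros Hj Hg. unfold admits, holds, ybound; simpl. rewrite lhs_upd by exact Hj.
  set (u := (Q2R (rhs c) - lhs c x y) / Q2R (cy c j)).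
  assert (Q2R (rhs c) = lhs c x y + Q2R (cy c j) * u) as -> by (unfold u; field; lra).
  clearbody u. destruct (strict c); simpl; nra.
Qed.

Lemma holds_upd_lower c x y j t : (j < q)%nat -> Q2R (cy c j) < 0 ->
  admits false (ybound j x y c, strict c) t -> holds c x (upd y j t).
Proof.
  intros Hj Hg. unfold admits, holds, ybound; simpl. rewrite lhs_upd by exact Hj.
  set (u := (Q2R (rhs c) - lhs c x y) / Q2R (cy c j)).
  assert (Q2R (rhs c) = lhs c x y + Q2R (cy c j) * u) as -> by (unfold u; field; lra).
  clearbody u. destruct (strict c); simpl; nra.
Qed.

Lemma comb_bounds j x y c1 c2 : 0 < Q2R (cy c1 j) -> Q2R (cy c2 j) < 0 ->
  holds (comb j c1 c2) x y ->
  Rrel (strict c1 || strict c2) (ybound j x y c2) (ybound j x y c1).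
Proof.
  intros H1 H2. unfold holds, ybound. rewrite lhs_comb, rhs_comb. simpl.
  set (u := (Q2R (rhs c1) - lhs c1 x y) / Q2R (cy c1 j)).
  set (w := (Q2R (rhs c2) - lhs c2 x y) / Q2R (cy c2 j)).
  assert (Q2R (rhs c1) = lhs c1 x y + Q2R (cy c1 j) * u) as -> by (unfold u; field; lra).
  assert (Q2R (rhs c2) = lhs c2 x y + Q2R (cy c2 j) * w) as -> by (unfold w; field; lra).
  clearbody u w. assert (Q2R (cy c1 j) * Q2R (cy c2 j) < 0) by nra.
  destruct (strict c1), (strict c2); simpl; nra.
Qed.

Lemma elim_complete j l x y : (j < q)%nat -> holds_all (elim j l) x y ->
  exists t, holds_all l x (upd y j t).
Proof.
  intros Hj H.
  set (bounds o := map (fun c => (ybound j x y c, strict c))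
                       (filter (fun c => sign_is o (cy c j)) l)).
  destruct (bounds_feasible (bounds Gt) (bounds Lt)) as [t [HU HL]].
  { intros u v Hu Hv. apply in_map_iff in Hu as [c1 [<- Hc1]], Hv as [c2 [<- Hc2]].
    apply filter_In in Hc1 as [Hc1 P1], Hc2 as [Hc2 P2]. simpl.
    apply comb_bounds; [exact (sign_is_spec Gt _ P1) | exact (sign_is_spec Lt _ P2) |].
    apply H. unfold elim. apply in_app_iff. right. apply in_flat_map.
    exists c1. split; [apply filter_In; auto|]. apply in_map, filter_In; auto. }
  exists t. intros c Hc.
  pose proof (sign_is_spec _ _ (sign_is_self (cy c j))) as Hsign.
  assert (Hclass : In c (filter (fun c' => sign_is (Qcompare (cy c j) 0) (cy c' j)) l))
    by (apply filter_In; split; [exact Hc | apply sign_is_self]).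
  assert (Hbound : In (ybound j x y c, strict c) (bounds (Qcompare (cy c j) 0)))
    by (apply in_map_iff; exists c; split; [reflexivity | exact Hclass]).
  destruct (Qcompare (cy c j) 0).
  - assert (Hkeep : holds c x y) by (apply H, in_app_iff; left; exact Hclass).
    unfold holds. rewrite lhs_upd, Hsign, Rmult_0_l, Rplus_0_r by exact Hj. exact Hkeep.
  - apply holds_upd_lower, HL; assumption.
  - apply holds_upd_upper, HU; assumption.
Qed.

Fixpoint elimall (js : list nat) (l : list ineq) : list ineq :=
  match js with nil => l | j :: js' => elim j (elimall js' l) end.

Lemma elimall_sound js l x y : holds_all l x y -> holds_all (elimall js l) x y.
Proof. induction js as [|j js IH]; simpl; [auto | intros; apply elim_sound, IH; auto]. Qed.

Lemma elimall_complete js l x y : (forall j, In j js -> (j < q)%nat) ->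
  holds_all (elimall js l) x y -> exists y', holds_all l x y'.
Proof.
  revert y. induction js as [|j js IH]; simpl; intros y Hjs H; [eauto|].
  destruct (elim_complete j (elimall js l) x y) as [t Ht]; auto.
  apply (IH (upd y j t)); auto.
Qed.

Lemma elimall_eliminates js l c : In c (elimall js l) ->
  forall j, In j js -> Q2R (cy c j) = 0.
Proof.
  revert c. induction js as [|j' js IH]; simpl; intros c Hc j Hj; [contradiction|].
  destruct Hj as [<-|Hj].
  - exact (elim_eliminates _ _ _ Hc).
  - exact (elim_keeps_zero j' j _ (fun c' Hc' => IH c' Hc' j Hj) c Hc).
Qed.

End FourierMotzkin.

(* Integral rounding of a rational inequality.  Multiplying a rational row a
   by the product of its denominators gives an integral row. *)

Fixpoint den_prod (n : nat) (a : nat -> Q) : Z :=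
  match n with O => 1%Z | S n' => (den_prod n' a * Zpos (Qden (a n')))%Z end.

Lemma den_prod_pos n a : (0 < den_prod n a)%Z.
Proof. induction n; simpl; lia. Qed.

Lemma den_prod_div n a j : (j < n)%nat -> (Zpos (Qden (a j)) | den_prod n a)%Z.
Proof.
  induction n as [|n IH]; simpl; intros Hj; [lia|].
  destruct (Nat.eq_dec j n) as [->|Hne].
  - apply Z.divide_factor_r.
  - apply Z.divide_mul_l, IH. lia.
Qed.

Definition int_row (n : nat) (a : nat -> Q) (j : nat) : Z :=
  (Qnum (a j) * (den_prod n a / Zpos (Qden (a j))))%Z.

Lemma dot_int_row n a x :
  dot n (fun j => IZR (int_row n a j)) x = IZR (den_prod n a) * dot n (fun j => Q2R (a j)) x.
Proof.
  rewrite <- dot_scal. apply dot_ext. intros j Hj.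
  destruct (den_prod_div n a j Hj) as [k Hk]. unfold int_row. rewrite Hk, Z.div_mul by lia.
  unfold Q2R. rewrite !mult_IZR. field. apply not_0_IZR. lia.
Qed.

(* [escape s rho] is the least integer z violating [Rrel s z rho]. *)
Definition escape (s : bool) (rho : R) : Z := if s then (1 - up (- rho))%Z else up rho.

Lemma escape_above s w rho : Rrel s w rho -> w < IZR (escape s rho).
Proof.
  unfold escape, Rrel. destruct s; intros H.
  - destruct (archimed (- rho)). rewrite minus_IZR. simpl (IZR 1). lra.
  - destruct (archimed rho). lra.
Qed.

Lemma escape_least s z rho : ~ Rrel s (IZR z) rho -> IZR (escape s rho) <= IZR z.
Proof.
  intros H. apply IZR_le.
  assert (IZR (escape s rho) < IZR (z + 1)) as K.
  { rewrite plus_IZR. unfold escape, Rrel in *. destruct s.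
    - destruct (archimed (- rho)). rewrite minus_IZR. simpl (IZR 1). lra.
    - destruct (archimed rho). lra. }
  apply lt_IZR in K. lia.
Qed.

(* The integral negation  neg_row . x <= neg_rhs  of the x-inequality c: it
   is violated wherever c holds, and it holds at every integral x violating c. *)
Definition neg_row (p : nat) (c : ineq) (j : nat) : Z := (- int_row p (cx c) j)%Z.
Definition neg_rhs (p : nat) (c : ineq) : Z :=
  (- escape (strict c) (IZR (den_prod p (cx c)) * Q2R (rhs c)))%Z.

Lemma dot_neg_row p c x : dot p (fun j => IZR (neg_row p c j)) x =
  - (IZR (den_prod p (cx c)) * dot p (fun j => Q2R (cx c j)) x).
Proof.
  rewrite <- dot_int_row, <- dot_opp. apply dot_ext. intros j _.
  unfold neg_row. rewrite opp_IZR. reflexivity.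
Qed.

Lemma neg_row_violated p c x :
  xholds p c x -> dot p (fun j => IZR (neg_row p c j)) x > IZR (neg_rhs p c).
Proof.
  intros H. unfold xholds in H. rewrite dot_neg_row. unfold neg_rhs. rewrite opp_IZR.
  pose proof (IZR_lt _ _ (den_prod_pos p (cx c))) as HN.
  apply (Rrel_scale _ _ _ _ HN), escape_above in H. lra.
Qed.

Lemma neg_row_holds p c x : int_vec p x -> ~ xholds p c x ->
  dot p (fun j => IZR (neg_row p c j)) x <= IZR (neg_rhs p c).
Proof.
  intros Hx H. unfold xholds in H.
  pose proof (IZR_lt _ _ (den_prod_pos p (cx c))) as HN.
  destruct (dot_int p (int_row p (cx c)) x Hx) as [z Hz]. rewrite dot_int_row in Hz.
  assert (Hesc : ~ Rrel (strict c) (IZR z) (IZR (den_prod p (cx c)) * Q2R (rhs c))).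
  { rewrite <- Hz. intros K. apply H, (Rrel_scale _ _ _ _ HN), K. }
  apply escape_least in Hesc. rewrite dot_neg_row. unfold neg_rhs. rewrite opp_IZR. lra.
Qed.

(* If no integral point satisfies the x-system F, the integral negations of
   the inequalities of F (padded with a repeated one, so that there are at
   least two) form a disjunction excluding the solution set of F. *)
Lemma integer_free_disjunction p (F : list ineq) :
  (forall x, int_vec p x -> exists c, In c F /\ ~ xholds p c x) ->
  exists (k : nat) (d : nat -> nat -> Z) (delta : nat -> Z), k_disjunction p k d delta /\
    forall x, (forall c, In c F -> xholds p c x) ->
      forall i, (i < k)%nat -> dot p (fun j => IZR (d i j)) x > IZR (delta i).
Proof.
  intros Hfree.
  destruct (Hfree (fun _ => 0)) as [c0 [Hc0 _]]; [intros j _; exists 0%Z; reflexivity|].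
  assert (Hnth : forall i, In (nth i F c0) F).
  { intros i. destruct (nth_in_or_default i F c0) as [H| ->]; auto. }
  exists (S (length F)), (fun i => neg_row p (nth i F c0)), (fun i => neg_rhs p (nth i F c0)).
  split; [split|].
  - destruct F; [contradiction | simpl; lia].
  - intros x Hx. destruct (Hfree x Hx) as [c [Hc Hviol]].
    destruct (In_nth F c c0 Hc) as [i [Hi <-]].
    exists i. split; [lia | apply neg_row_holds; auto].
  - intros x Hall i _. apply neg_row_violated, Hall, Hnth.
Qed.

Lemma conv_point p q (S : pset) z : S z -> conv p q S z.
Proof.
  intros Hz. exists ((1, z) :: nil). split; [|split; [|split]].
  - constructor; [simpl; split; [lra | exact Hz] | constructor].
  - unfold wsum_w; simpl. ring.
  - intros j _. unfold wsum_x; simpl. rewrite Rmult_1_l, Rplus_0_r. reflexivity.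
  - intros j _. unfold wsum_y; simpl. rewrite Rmult_1_l, Rplus_0_r. reflexivity.
Qed.

Section CutRegion.
Variables (m p q : nat) (A G : nat -> nat -> Q) (b : nat -> Q)
          (alpha beta : nat -> Q) (gamma : Q).

Definition row_ineq (i : nat) : ineq := Ineq (A i) (G i) (b i) false.
Definition cut_ineq : ineq :=
  Ineq (fun j => - alpha j)%Q (fun j => - beta j)%Q (- gamma)%Q true.
Definition cut_system : list ineq := cut_ineq :: map row_ineq (seq 0 m).

Lemma holds_cut_system x y : holds_all p q cut_system x y <->
  polyhedron m p q A G b (x, y) /\
  dot p (fun j => Q2R (alpha j)) x + dot q (fun j => Q2R (beta j)) y > Q2R gamma.
Proof.
  assert (Hcut : holds p q cut_ineq x y <->
    dot p (fun j => Q2R (alpha j)) x + dot q (fun j => Q2R (beta j)) y > Q2R gamma).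
  { unfold holds, lhs, Rrel; simpl. rewrite Q2R_opp.
    rewrite (dot_ext p _ (fun j => - Q2R (alpha j)) x x) by (intros; rewrite Q2R_opp; ring).
    rewrite (dot_ext q _ (fun j => - Q2R (beta j)) y y) by (intros; rewrite Q2R_opp; ring).
    rewrite !dot_opp. lra. }
  split.
  - intros H. split; [|apply Hcut, H; left; reflexivity].
    intros i Hi. apply (H (row_ineq i)). right. apply in_map, in_seq. lia.
  - intros [HP Hv] c [<-|Hc]; [apply Hcut, Hv|].
    apply in_map_iff in Hc as [i [<- Hi]]. apply in_seq in Hi. apply (HP i). lia.
Qed.

Definition projection : list ineq := elimall (seq 0 q) cut_system.

Lemma projection_yfree c x y : In c projection -> holds p q c x y <-> xholds p c x.
Proof.
  intros Hc. apply holds_yfree. intros j Hj.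
  apply (elimall_eliminates _ _ _ Hc), in_seq. lia.
Qed.

Lemma projection_sound x y : polyhedron m p q A G b (x, y) ->
  dot p (fun j => Q2R (alpha j)) x + dot q (fun j => Q2R (beta j)) y > Q2R gamma ->
  forall c, In c projection -> xholds p c x.
Proof.
  intros HP Hv c Hc. apply (projection_yfree c x y Hc).
  apply (elimall_sound p q (seq 0 q) cut_system x y); [apply holds_cut_system; auto | exact Hc].
Qed.

Lemma projection_integer_free :
  valid p q alpha beta gamma (mixed_int_hull p q (polyhedron m p q A G b)) ->
  forall x, int_vec p x -> exists c, In c projection /\ ~ xholds p c x.
Proof.
  intros HI x Hx. apply NNPP. intros Hnone.
  destruct (elimall_complete p q (seq 0 q) cut_system x (fun _ => 0)) as [y Hy].
  - intros j Hj. apply in_seq in Hj. lia.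
  - intros c Hc. apply (projection_yfree c x _ Hc).
    apply NNPP. intros Hn. apply Hnone. exists c. split; assumption.
  - apply holds_cut_system in Hy as [HP Hv].
    assert (Hhull : mixed_int_hull p q (polyhedron m p q A G b) (x, y))
      by (apply conv_point; split; assumption).
    apply HI in Hhull. simpl in Hhull. lra.
Qed.

End CutRegion.

Theorem lemma2p5 (m p q : nat) (A G : nat -> nat -> Q) (b : nat -> Q)
    (alpha beta : nat -> Q) (gamma : Q) :
  valid p q alpha beta gamma (mixed_int_hull p q (polyhedron m p q A G b)) ->
  ~ valid p q alpha beta gamma (polyhedron m p q A G b) ->
  exists k : nat, (2 <= k)%nat /\
    k_disjunctive_cut p q k alpha beta gamma (polyhedron m p q A G b).
Proof.
  intros HI HnP.
  destruct (integer_free_disjunction p (projection m q A G b alpha beta gamma))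
    as [k [d [delta [Hdisj Hcut]]]].
  { exact (projection_integer_free m p q A G b alpha beta gamma HI). }
  exists k. split; [exact (proj1 Hdisj)|].
  split; [exact HnP|]. exists d, delta. split; [exact Hdisj|].
  intros [x y] HP Hv.
  exact (Hcut x (projection_sound m p q A G b alpha beta gamma x y HP Hv)).
Qed.
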